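(* Every 3-colourable finite graph is 101-colourable.
   Context: A finite simple undirected graph is 101-colourable if there is an assignment of a value in $\{0,1\}$ to each vertex such that (i) no two adjacent vertices are both assigned $0$, and (ii) no triangle (3-clique) has all three vertices assigned $1$. *)

From mathcomp Require Import all_boot.
Set Implicit Arguments. Unset Strict Implicit. Unset Printing Implicit Defensive.

Definition simple_graph (V : finType) (e : rel V) : Prop :=
  symmetric e /\ irreflexive e.

Definition colourable (k : nat) (V : finType) (e : rel V) : Prop :=
  exists c : V -> 'I_k, forall x y, e x y -> c x != c y.

(* 101-colourable: a 0/1 assignment such that (i) no two adjacent vertices
   are both 0, and (ii) no triangle has all three vertices 1. *)
Definition colourable101 (V : finType) (e : rel V) : Prop :=
  exists f : V -> bool,
    (forall x y, e x y -> f x || f y) /\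
    (forall x y z, e x y -> e y z -> e x z -> ~~ [&& f x, f y & f z]).

From mathcomp Require Import all_boot.

(* Fix a proper colouring c with colours 'I_3 and label a vertex 0 exactly
   when it receives colour 0, and 1 otherwise.
   - The vertices coloured 0 form an independent set, so no edge has both
     ends labelled 0 (condition (i)).
   - The three vertices of a triangle receive pairwise distinct colours;
     three distinct colours out of three exhaust 'I_3, so colour 0 occurs
     on every triangle and no triangle is labelled 1,1,1 (condition (ii)). *)

Lemma uniq_full_mem {T : finType} {s : seq T} :
  uniq s -> size s = #|T| -> forall x, x \in s.
Proof.
move=> s_uniq s_size x.
have card_s : #|s| = #|predT : {pred T}| by rewrite (card_uniqP s_uniq).
have s_full : s =i predT by apply/(subset_cardP card_s)/subset_predT.
by rewrite s_full.
Qed.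

Lemma distinct3_cover {a b d : 'I_3} :
  a != b -> b != d -> a != d -> forall i, i \in [:: a; b; d].
Proof.
move=> ab bd ad; apply: uniq_full_mem; last by rewrite card_ord.
by rewrite /= !inE negb_or ab ad bd.
Qed.

Theorem mainTheorem3 (V : finType) (e : rel V) :
  simple_graph e -> colourable 3 e -> colourable101 e.
Proof.
move=> _ [c c_proper].
exists (fun x => c x != ord0); split.
-
  move=> x y /c_proper; apply: contraR; rewrite negb_or !negbK.
  by case/andP=> /eqP -> /eqP ->.
-
  move=> x y z /c_proper cxy /c_proper cyz /c_proper cxz.
  have := distinct3_cover cxy cyz cxz ord0.
  by rewrite !inE; case/or3P=> /eqP <-; rewrite eqxx ?andbF.
Qed.
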